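(* Let $k$ be a positive integer and let $\zeta$ be a primitive $2k$-th root of unity. Let $Q_k$ denote the set of quasipolarities of $\mathbb{Z}/2k\mathbb{Z}$. Then \[ \sum_{\pi\in Q_{k}}\prod_{j=0}^{2k-1}\frac{1+\zeta^{j-\pi(j)}}{1-\zeta^{j-\pi(j)}} = [2\mid k]\,(|Q_{2k}|-|Q_{k}|) = [2\mid k]\,(s_{1}^{*}(2k)-s_{1}^{*}(k)), \] where $[2\mid k]$ equals $1$ if $k$ is even and $0$ if $k$ is odd.
   Context: The affine general linear group $\overrightarrow{GL}(\mathbb{Z}/m\mathbb{Z})$ consists of the maps $e^{u}.v:\mathbb{Z}/m\mathbb{Z}\to\mathbb{Z}/m\mathbb{Z}$, $x\mapsto vx+u$, with $u\in\mathbb{Z}/m\mathbb{Z}$ and $v\in(\mathbb{Z}/m\mathbb{Z})^{\times}$. For a positive integer $k$, $Q_k$ is the set of quasipolarities of $\mathbb{Z}/2k\mathbb{Z}$, i.e. elements $\pi\in\overrightarrow{GL}(\mathbb{Z}/2k\mathbb{Z})$ that are involutions ($\pi\circ\pi=\mathrm{id}$) and derangements ($\pi(x)\neq x$ for all $x$); thus $Q_{2k}$ is the corresponding set for $\mathbb{Z}/4k\mathbb{Z}$. Elements $j\in\{0,\dots,2k-1\}$ are identified with residues mod $2k$; the exponent $j-\pi(j)$ is taken mod $2k$ (well defined since $\zeta^{2k}=1$), and denominators are nonzero because $\pi$ is a derangement. A divisor $d$ of $n$ is unitary if $\gcd(d,n/d)=1$, and $s_1^{*}(n)$ denotes the sum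 of the unitary divisors of $n$. *)

From mathcomp Require Import all_boot all_order all_algebra all_field.
Set Implicit Arguments. Unset Strict Implicit. Unset Printing Implicit Defensive.

(* An element e^u.v of the affine general linear group of Z/mZ is encoded by
   the pair (u, v) of residues in 'I_m (u, v in {0,..,m-1}); it acts on
   residues x in {0,..,m-1} by x |-> (v * x + u) mod m.  For m >= 2 distinct
   pairs give distinct maps (values at 0 and 1 determine u and v). *)
Definition aff_act (m : nat) (p : 'I_m * 'I_m) (x : nat) : nat :=
  (p.2 * x + p.1) %% m.

Definition quasipolarities (m : nat) : {set 'I_m * 'I_m} :=
  [set p : 'I_m * 'I_m | [&& coprime p.2 m,
      [forall x : 'I_m, aff_act p (aff_act p x) == x] &
      [forall x : 'I_m, aff_act p x != x]]].

Definition Q (k : nat) := quasipolarities k.*2.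

Definition s1star (n : nat) : nat :=
  \sum_(d <- divisors n | coprime d (n %/ d)) d.

From mathcomp Require Import all_boot all_order all_algebra all_field.
From mathcomp Require Import ring.

(* A quasipolarity x |-> v x + u of Z/2nZ amounts to a unitary divisor d of n together
   with some x < d, through u = (n/d)(2x + 1), v = 1 mod 2n/d and v = -1 mod 2d; hence
   |Q_n| = s1*(n).  For such a map let w_j = zeta^(j - pi(j)), never 1 as pi has no
   fixed point.  If d is even then w_(j + n/2) = -w_j, and (1 + w)/(1 - w) is inverse to
   (1 - w)/(1 + w), so the product over j is 1; if d is odd then some w_j = -1 and the
   product vanishes.  The sum is therefore the sum of the even unitary divisors of k:
   0 for odd k, and s1*(2k) - s1*(k) for even k, because the unitary divisors of 2k
   are then the odd unitary divisors of k and the doubles of its even ones. *)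

Lemma modn_addr_eq m x y : x < m -> ((x + y) %% m == x) = (m %| y).
Proof.
by move=> ltxm; rewrite -{2}(modn_small ltxm) -[x in _ == x %% _]addn0 eqn_modDl mod0n.
Qed.

Lemma linear_congruence_solvable m a b :
  0 < m -> [exists x : 'I_m, m %| a * x + b] = (gcdn a m %| b).
Proof.
move=> m_gt0; apply/existsP/idP => [[x m_dvd] | /dvdnP[c ->]].
  have := dvdn_trans (dvdn_gcdr a m) m_dvd.
  by rewrite (dvdn_addr _ (dvdn_mulr x (dvdn_gcdl a m))).
have [t _ m_dvd_bez] := Bezoutl a m_gt0.
exists (Ordinal (ltn_pmod (t * c) m_gt0)); rewrite /= /dvdn -modnDml modnMmr modnDml.
have -> : a * (t * c) + c * gcdn a m = c * (gcdn m a + t * a) by rewrite gcdnC; ring.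
by rewrite -/(dvdn _ _) dvdn_mull.
Qed.

Lemma aff_act_fixE m (p : 'I_m * 'I_m) x : 0 < p.2 -> x < m ->
  (aff_act p x == x) = (m %| p.2.-1 * x + p.1).
Proof. by case: p => u [[|w] ltw] //= _ ltxm; rewrite /aff_act /= mulSn -addnA modn_addr_eq. Qed.

Lemma aff_act_twiceE m (p : 'I_m * 'I_m) x : 0 < p.2 -> x < m ->
  (aff_act p (aff_act p x) == x) = (m %| p.2.-1 * p.2.+1 * x + p.2.+1 * p.1).
Proof.
case: p => u [[|w] ltw] //= _ ltxm; rewrite /aff_act /= -modnDml modnMmr modnDml.
have -> : w.+1 * (w.+1 * x + u) + u = x + (w * w.+2 * x + w.+2 * u) by ring.
exact: modn_addr_eq.
Qed.

Lemma aff_act_involutiveE m (p : 'I_m * 'I_m) : 1 < m -> 0 < p.2 ->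
  [forall x : 'I_m, aff_act p (aff_act p x) == x] =
  (m %| p.2.-1 * p.2.+1) && (m %| p.2.+1 * p.1).
Proof.
move=> m_gt1 v_gt0; apply/forallP/andP => [invol | [dvd_v dvd_u] x].
  have := invol (Ordinal (ltnW m_gt1)); have := invol (Ordinal m_gt1).
  rewrite !aff_act_twiceE ?ltn_ord //= muln0 add0n muln1 => dvd_vu dvd_u.
  by rewrite -(dvdn_addl _ dvd_u).
by rewrite aff_act_twiceE // dvdn_add // dvdn_mulr.
Qed.

Lemma aff_act_fixfreeE m (p : 'I_m * 'I_m) : 0 < m -> 0 < p.2 ->
  [forall x : 'I_m, aff_act p x != x] = ~~ (gcdn p.2.-1 m %| p.1).
Proof.
move=> m_gt0 v_gt0; rewrite -linear_congruence_solvable // negb_exists.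
by apply/eq_forallb => x; rewrite aff_act_fixE.
Qed.

Lemma coprime_of_sqr_eq1 {m v} : 0 < v -> m %| v.-1 * v.+1 -> coprime v m.
Proof.
case: v => // w _ dvd_m; rewrite /coprime -dvdn1.
have dvd_sqr : gcdn w.+1 m %| w * w.+2 + 1.
  by rewrite (_ : _ + 1 = w.+1 * w.+1) ?dvdn_mulr ?dvdn_gcdl //; ring.
by rewrite -(dvdn_addr _ (dvdn_trans (dvdn_gcdr _ _) dvd_m)).
Qed.

Definition qpol_cond m u v :=
  [&& 0 < v, m %| v.-1 * v.+1, m %| v.+1 * u & ~~ (gcdn v.-1 m %| u)].

Lemma quasipolaritiesE m (p : 'I_m * 'I_m) :
  1 < m -> (p \in quasipolarities m) = qpol_cond m p.1 p.2.
Proof.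
move=> m_gt1; rewrite inE /qpol_cond; case: posnP => [-> | v_gt0].
  by rewrite /coprime gcd0n gtn_eqF.
rewrite aff_act_involutiveE // aff_act_fixfreeE ?(ltnW m_gt1) //=.
by case: (boolP (m %| _ * _)) => [dvd_v | _]; rewrite ?(coprime_of_sqr_eq1 v_gt0 dvd_v) /= ?andbF.
Qed.

Definition unitary_divisor n d := (d %| n) && coprime d (n %/ d).

Definition qpol_param n d x u v :=
  [/\ u = n %/ d * x.*2.+1, (n %/ d).*2 %| v.-1 & d.*2 %| v.+1].

Lemma qpol_param_gt0 {n d x u v} : qpol_param n d x u v -> 0 < v.
Proof. by case: v => // -[_ _]; rewrite dvdn1 => /eqP/(congr1 odd); rewrite odd_double. Qed.

Lemma qpol_param_cond {n d x u v} :
  0 < n -> d %| n -> qpol_param n d x u v -> qpol_cond n.*2 u v.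
Proof.
move=> n_gt0 dvd_dn param; have v_gt0 := qpol_param_gt0 param.
case: param => -> dvd_v1 dvd_v2; set e := n %/ d in dvd_v1 *.
have n_de : n = d * e by rewrite /e mulnC divnK.
clearbody e; have e_gt0 : 0 < e by move: n_gt0; rewrite n_de muln_gt0 => /andP[].
rewrite /qpol_cond v_gt0 /=; apply/and3P; split.
- apply: dvdn_trans (dvdn_mul dvd_v1 dvd_v2).
  by rewrite n_de; apply/dvdnP; exists 2; rewrite -!muln2; ring.
- by rewrite n_de doubleMl dvdn_mul // dvdn_mulr.
- have dvd_g : e.*2 %| gcdn v.-1 n.*2 by rewrite dvdn_gcd dvd_v1 n_de doubleMr dvdn_mull.
  apply/negP => /(dvdn_trans dvd_g).
  by rewrite -muln2 dvdn_pmul2l // dvdn2 /= odd_double.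
Qed.

Lemma dvdn_double_ndvdn {g u} : g %| u.*2 -> ~~ (g %| u) ->
  exists e a, [/\ g = e.*2, odd a & u = e * a].
Proof.
move=> dvd_g2u ndvd_gu.
have even_g : ~~ odd g.
  apply: contra ndvd_gu => odd_g.
  by rewrite -(Gauss_dvdl _ (_ : coprime g 2)) ?muln2 // coprimen2 odd_g.
have [e g_2e] : exists e, g = e.*2 by exists g./2; rewrite even_halfK.
move: dvd_g2u ndvd_gu; rewrite g_2e -!muln2 dvdn_pmul2r // => /dvdnP[a ->] ndvd.
exists e, a; split; [exact: muln2 | | exact: mulnC].
apply: contraR ndvd; rewrite -dvdn2 => /dvdnP[b ->].
by apply/dvdnP; exists b; ring.
Qed.

Lemma dvdn_of_double_odd {d s a} : odd a -> d %| s.*2 -> d %| s * a -> d %| s.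
Proof.
move=> odd_a dvd_2s dvd_sa; have : d %| gcdn (s * 2) (s * a) by rewrite dvdn_gcd muln2 dvd_2s.
by rewrite -muln_gcdr (eqP (_ : coprime 2 a)) ?muln1 ?coprime2n.
Qed.

Lemma qpol_cond_param {n u v} : 0 < n -> u < n.*2 -> qpol_cond n.*2 u v ->
  exists d x, [/\ unitary_divisor n d, x < d & qpol_param n d x u v].
Proof.
move=> n_gt0 u_lt; case: v => [|w] /and4P[//= _ dvd_vv dvd_vu ndvd_gu].
have dvd_g2u : gcdn w n.*2 %| u.*2.
  have : gcdn w n.*2 %| w * u + u.*2.
    by rewrite (_ : _ + _ = w.+2 * u) ?(dvdn_trans (dvdn_gcdr _ _)) // -muln2; ring.
  by rewrite dvdn_addr // dvdn_mulr ?dvdn_gcdl.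
(* gcd(v - 1, 2n) = 2(n/d) determines d. *)
have [e [a [g_2e odd_a u_ea]]] := dvdn_double_ndvdn dvd_g2u ndvd_gu.
have e2_gt0 : 0 < e.*2 by rewrite -g_2e gcdn_gt0 double_gt0 n_gt0 orbT.
have e_gt0 : 0 < e by rewrite -double_gt0.
have /dvdnP[t] : e.*2 %| w by rewrite -g_2e dvdn_gcdl.
rewrite mulnC => w_et.
have [d n_de] : exists d, n = d * e.
  by apply/dvdnP; rewrite -(dvdn_pmul2r (isT : 0 < 2)) !muln2 -g_2e dvdn_gcdr.
have cop_td : coprime t d.
  rewrite /coprime -(eqn_pmul2l e2_gt0).
  by rewrite muln_gcdr muln1 -w_et -doubleMl mulnC -n_de g_2e.
have n2_ed : n.*2 = e.*2 * d by rewrite n_de doubleMr mulnC.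
pose s := e * t + 1.
have w2_s : w.+2 = s.*2 by rewrite w_et /s -!muln2; ring.
have dvd_ds2 : d %| s.*2.
  rewrite -(Gauss_dvdr _ (_ : coprime d t)) 1?coprime_sym //.
  by rewrite -(dvdn_pmul2l e2_gt0) mulnA -w_et -w2_s -n2_ed.
have dvd_dsa : d %| s * a.
  rewrite -(dvdn_pmul2l e2_gt0) -n2_ed (_ : _ * _ = w.+2 * u) //.
  by rewrite w2_s u_ea -!muln2; ring.
have dvd_ds := dvdn_of_double_odd odd_a dvd_ds2 dvd_dsa.
have cop_de : coprime d e.
  rewrite /coprime -dvdn1 -(dvdn_addr _ (dvdn_mulr t (dvdn_gcdr d e))).
  exact: dvdn_trans (dvdn_gcdl _ _) dvd_ds.
have d_gt0 : 0 < d by move: n_gt0; rewrite n_de muln_gt0 => /andP[].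
have nd_e : n %/ d = e by rewrite n_de mulKn.
exists d, a./2; split.
- by rewrite /unitary_divisor nd_e cop_de n_de dvdn_mulr.
- by rewrite ltn_half_double -(ltn_pmul2l e_gt0) -u_ea -doubleMr mulnC -n_de.
- rewrite /qpol_param nd_e; split.
  + by rewrite u_ea -[in LHS](odd_double_half a) odd_a.
  + by rewrite w_et dvdn_mulr.
  + by rewrite w2_s -!muln2 dvdn_pmul2r.
Qed.

Lemma qpol_param_coprime {n d d' x x' u u' v} :
  qpol_param n d x u v -> qpol_param n d' x' u' v -> coprime (n %/ d) d'.
Proof.
move=> param [_ _ dvd_v2]; have := qpol_param_gt0 param; case: param => _ dvd_v1 _.
case: v dvd_v1 dvd_v2 => // w dvd_w dvd_w2 _; set g := gcdn (n %/ d) d'.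
have dvd_g2 : g.*2 %| gcdn w w.+2.
  by rewrite dvdn_gcd (dvdn_trans _ dvd_w) ?(dvdn_trans _ dvd_w2) // -!muln2
             dvdn_pmul2r ?dvdn_gcdl ?dvdn_gcdr.
have gcd_w : gcdn w w.+2 %| 2 by rewrite -addn2 gcdnDl dvdn_gcdr.
by rewrite /coprime -dvdn1 -(dvdn_pmul2r (isT : 0 < 2)) mul1n muln2 (dvdn_trans dvd_g2).
Qed.

Lemma qpol_param_inj {n d d' x x' u v} : 0 < n -> d %| n -> d' %| n ->
  qpol_param n d x u v -> qpol_param n d' x' u v -> d = d' /\ x = x'.
Proof.
move=> n_gt0 dvd_dn dvd_d'n param param'.
have dvd_quo d1 d2 x1 x2 : d1 %| n -> d2 %| n ->
    qpol_param n d1 x1 u v -> qpol_param n d2 x2 u v -> n %/ d1 %| n %/ d2.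
  move=> dvd1 dvd2 p1 p2; rewrite -(Gauss_dvdl _ (qpol_param_coprime p1 p2)).
  by rewrite divnK // dvdn_div.
have e_eq : n %/ d = n %/ d'.
  by apply/eqP; rewrite eqn_dvd (dvd_quo _ _ _ _ dvd_dn dvd_d'n param param')
                                (dvd_quo _ _ _ _ dvd_d'n dvd_dn param' param).
have e_gt0 : 0 < n %/ d by rewrite divn_gt0 (dvdn_gt0 n_gt0 dvd_dn, dvdn_leq n_gt0 dvd_dn).
split.
  by apply/eqP; rewrite -(eqn_pmul2l e_gt0) {2}e_eq !divnK.
case: param param' => -> _ _ [/eqP]; rewrite {1}e_eq eqn_pmul2l -?e_eq // eqSS.
by rewrite -!muln2 eqn_pmul2r // => /eqP.
Qed.

Lemma qpol_param_v_uniq {n d x x' u u' v v'} : unitary_divisor n d ->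
  v < n.*2 -> v' < n.*2 -> qpol_param n d x u v -> qpol_param n d x' u' v' -> v = v'.
Proof.
move=> /andP[dvd_dn cop_de].
wlog le_vv' : x x' u u' v v' / v <= v'.
  move=> uniq lt_v lt_v' p p'; case: (leqP v v') => [le | /ltnW le].
    exact: uniq p p'.
  exact: esym (uniq _ _ _ _ _ _ le lt_v' lt_v p' p).
move=> _ lt_v' p p'; have v_gt0 := qpol_param_gt0 p; have v'_gt0 := qpol_param_gt0 p'.
case: p p' => _ dvd_v1 dvd_v2 [_ dvd_v1' dvd_v2'].
have dvd_e : (n %/ d).*2 %| v' - v.
  by rewrite -(subnK v_gt0) -(subnK v'_gt0) subnDr !subn1 dvdn_sub.
have dvd_d : d.*2 %| v' - v by rewrite -(subnDr 1) !addn1 dvdn_sub.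
have lcm_n : lcmn (n %/ d).*2 d.*2 = n.*2.
  rewrite -!muln2 -muln_lcml -[lcmn _ _]muln1 -(eqP (_ : coprime (n %/ d) d)) 1?coprime_sym //.
  by rewrite muln_lcm_gcd divnK.
have : n.*2 %| v' - v by rewrite -lcm_n dvdn_lcm dvd_e dvd_d.
rewrite /dvdn modn_small ?(leq_ltn_trans (leq_subr _ _) lt_v') // subn_eq0 => le_v'v.
by apply/eqP; rewrite eqn_leq le_vv' le_v'v.
Qed.

(* v = 1 mod 2n/d and v = -1 mod 2d, by the Chinese remainder theorem. *)
Definition qpol_v n d := (chinese (n %/ d) d 0 d.-1 %% n).*2.+1.

Lemma qpol_v_lt n d : 0 < n -> qpol_v n d < n.*2.
Proof. by move=> n_gt0; rewrite /qpol_v -doubleS leq_double ltn_mod. Qed.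

Lemma qpol_param_exists n d x : 0 < n -> unitary_divisor n d ->
  qpol_param n d x (n %/ d * x.*2.+1) (qpol_v n d).
Proof.
move=> n_gt0 /andP[dvd_dn cop_de]; rewrite coprime_sym in cop_de.
have d_gt0 : 0 < d := dvdn_gt0 n_gt0 dvd_dn.
rewrite /qpol_param /qpol_v -doubleS -!muln2 !dvdn_pmul2r //; split=> //.
  by rewrite /dvdn modn_dvdm ?dvdn_div // chinese_modl // mod0n.
rewrite /dvdn -addn1 -modnDml modn_dvdm // chinese_modr // (@modn_small d.-1) ?ltn_predL //.
by rewrite addn1 prednK ?modnn.
Qed.

Lemma qpol_u_lt n d x : 0 < n -> d %| n -> x < d -> n %/ d * x.*2.+1 < n.*2.
Proof.
move=> n_gt0 dvd_dn lt_xd; have e_gt0 : 0 < n %/ d.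
  by rewrite divn_gt0 (dvdn_gt0 n_gt0 dvd_dn, dvdn_leq n_gt0 dvd_dn).
by rewrite -{2}(divnK dvd_dn) doubleMr ltn_pmul2l // -doubleS leq_double.
Qed.

Definition qpol_index n : {set 'I_n.+1 * 'I_n} :=
  [set s : 'I_n.+1 * 'I_n | unitary_divisor n s.1 & s.2 < s.1].

(* The reductions mod 2n only serve to land in 'I_n.*2: they are trivial on qpol_index. *)
Definition qpol_of {n} (n2_gt0 : 0 < n.*2) (s : 'I_n.+1 * 'I_n) : 'I_n.*2 * 'I_n.*2 :=
  (Ordinal (ltn_pmod (n %/ s.1 * s.2.*2.+1) n2_gt0),
   Ordinal (ltn_pmod (qpol_v n s.1) n2_gt0)).

Section QuasipolarityIndex.

Context {n : nat} (n2_gt0 : 0 < n.*2).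
Let n_gt0 : 0 < n. Proof. by rewrite -double_gt0. Qed.
Local Notation qpol_of := (qpol_of n2_gt0).

Lemma qpol_of_param {s} : s \in qpol_index n ->
  qpol_param n s.1 s.2 (qpol_of s).1 (qpol_of s).2.
Proof.
rewrite inE => /andP[ud lt_xd]; have /andP[dvd_dn _] := ud.
by rewrite /= !modn_small ?qpol_v_lt ?qpol_u_lt //; apply: qpol_param_exists.
Qed.

Lemma qpol_of_inj : {in qpol_index n &, injective qpol_of}.
Proof.
move=> s s' s_in s'_in eq_ss'.
have := qpol_of_param s_in; have := qpol_of_param s'_in; rewrite -eq_ss'.
move: s_in s'_in; rewrite !inE => /andP[/andP[dvd_dn _] _] /andP[/andP[dvd_d'n _] _] p' p.
have [eq_d eq_x] := qpol_param_inj n_gt0 dvd_dn dvd_d'n p p'.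
by case: s s' eq_d eq_x {eq_ss' p p' dvd_dn dvd_d'n} => [d x] [d' x'] /= /val_inj-> /val_inj->.
Qed.

Lemma quasipolarities_imset : quasipolarities n.*2 = qpol_of @: qpol_index n.
Proof.
have n2_gt1 : 1 < n.*2 by rewrite -addnn -add1n leq_add.
apply/setP => p; rewrite quasipolaritiesE //; apply/idP/imsetP => [cond | [s s_in ->]].
  have [d [x [ud lt_xd param]]] := qpol_cond_param n_gt0 (ltn_ord p.1) cond.
  have /andP[dvd_dn _] := ud.
  have lt_dn : d < n.+1 by rewrite ltnS dvdn_leq.
  have lt_xn : x < n := leq_trans lt_xd (dvdn_leq n_gt0 dvd_dn).
  have s_in : (Ordinal lt_dn, Ordinal lt_xn) \in qpol_index n by rewrite inE /= ud.
  exists (Ordinal lt_dn, Ordinal lt_xn) => //; have := qpol_of_param s_in.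
  case: p param {cond} => [u v] /= param param'; congr (_, _); apply: val_inj.
    by case: param param' => /= -> _ _ [-> _ _].
  exact: qpol_param_v_uniq ud (ltn_ord v) (ltn_pmod _ n2_gt0) param param'.
have := qpol_of_param s_in; move: s_in; rewrite inE => /andP[/andP[dvd_dn _] _].
exact: qpol_param_cond n_gt0 dvd_dn.
Qed.

Lemma big_quasipolarities (R : Type) (idx : R) (op : Monoid.com_law idx) F :
  \big[op/idx]_(p in quasipolarities n.*2) F p =
  \big[op/idx]_(s in qpol_index n) F (qpol_of s).
Proof. by rewrite quasipolarities_imset big_imset //; apply: qpol_of_inj. Qed.

End QuasipolarityIndex.

Lemma sum_qpol_index n (f : nat -> nat) :
  \sum_(s in qpol_index n) f s.1 = \sum_(d < n.+1 | unitary_divisor n d) d * f d.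
Proof.
rewrite (eq_bigl (fun s : 'I_n.+1 * 'I_n => unitary_divisor n s.1 && (s.2 < s.1))); last first.
  by move=> s; rewrite inE.
rewrite -(pair_big_dep (fun d : 'I_n.+1 => unitary_divisor n d) (fun d (x : 'I_n) => x < d)
                       (fun d _ => f d)).
apply: eq_bigr => d _; have le_dn : d <= n by rewrite -ltnS.
by rewrite (big_ord_narrow (F := fun=> f d) le_dn) sum_nat_const card_ord.
Qed.

Lemma unitary_divisor_leq {n d} : 0 < n -> unitary_divisor n d -> d <= n.
Proof. by move=> n_gt0 /andP[dvd_dn _]; apply: dvdn_leq. Qed.

Lemma s1starE n : 0 < n -> s1star n = \sum_(d < n.+1 | unitary_divisor n d) d.
Proof.
move=> n_gt0; rewrite /s1star -(big_mkord (unitary_divisor n) (fun d => d)) -big_filter_cond.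
apply/perm_big/uniq_perm; rewrite ?filter_uniq ?divisors_uniq ?iota_uniq // => d.
rewrite mem_filter mem_index_iota -dvdn_divisors // /unitary_divisor.
by case: (boolP (d %| n)) => //= dvd_dn; rewrite ltnS dvdn_leq.
Qed.

Lemma card_quasipolarities n : 0 < n -> #|quasipolarities n.*2| = s1star n.
Proof.
move=> n_gt0; have n2_gt0 : 0 < n.*2 by rewrite double_gt0.
rewrite -sum1_card (big_quasipolarities n2_gt0) (sum_qpol_index n (fun=> 1)) s1starE //.
by apply: eq_bigr => d _; rewrite muln1.
Qed.

Definition s1star_even n := \sum_(d < n.+1 | unitary_divisor n d && (2 %| d)) d.

Lemma big_ord_widen_bounded n N (P : pred nat) (F : nat -> nat) :
  (forall d, P d -> d < n) -> n <= N ->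
  \sum_(d < n | P d) F d = \sum_(d < N | P d) F d.
Proof.
move=> P_lt le_nN; rewrite (big_ord_widen_cond N) //; apply: eq_bigl => d.
by case: (boolP (P d)) => // /P_lt.
Qed.

Lemma sum_ord_double (P : pred nat) (F : nat -> nat) M :
  \sum_(d < M.*2 | P d) F d =
  \sum_(i < M | P i.*2) F i.*2 + \sum_(i < M | P i.*2.+1) F i.*2.+1.
Proof.
rewrite [LHS]big_mkcond [X in _ = X + _]big_mkcond [X in _ = _ + X]big_mkcond /=.
elim: M => [|M IHM]; first by rewrite !big_ord0.
by rewrite doubleS !big_ord_recr /= IHM; ring.
Qed.

Lemma unitary_divisor_double_odd n d : odd d ->
  unitary_divisor n.*2 d = unitary_divisor n d.
Proof.
move=> odd_d; have cop_d2 : coprime d 2 by rewrite coprimen2 odd_d.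
rewrite /unitary_divisor -muln2 Gauss_dvdl //.
by case: (boolP (d %| n)) => //= dvd_dn; rewrite -divn_mulAC // coprimeMr cop_d2 andbT.
Qed.

Lemma unitary_divisor_double_even n d : ~~ odd n ->
  unitary_divisor n.*2 d.*2 = unitary_divisor n d && (2 %| d).
Proof.
move=> even_n; rewrite /unitary_divisor -!muln2 dvdn_pmul2r //.
case: (boolP (d %| n)) => //= dvd_dn.
rewrite divnMr // coprimeMl coprime2n dvdn2.
case: (boolP (coprime d (n %/ d))) => //= cop.
case: (boolP (odd d)) => /= odd_d.
  by move: even_n; rewrite -{1}(divnK dvd_dn) oddM odd_d andbT => /negbTE.
apply/negPn/negP => even_q; have : 2 %| gcdn d (n %/ d) by rewrite dvdn_gcd !dvdn2 odd_d.
by rewrite (eqP cop).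
Qed.

Lemma s1star_even_odd n : odd n -> s1star_even n = 0.
Proof.
move=> odd_n; apply: big_pred0 => d; apply/negbTE/negP => /andP[/andP[dvd_dn _] dvd_2d].
by move: odd_n; rewrite -[odd n]negbK -dvdn2 (dvdn_trans dvd_2d dvd_dn).
Qed.

Lemma s1star_double n : 0 < n -> ~~ odd n -> s1star n.*2 = s1star n + s1star_even n.
Proof.
move=> n_gt0 even_n; pose N := n.+1.*2.
have le_n1N : n.+1 <= N by rewrite /N -addnn leq_addr.
have lt_n2N : n.*2 < N by rewrite ltn_double.
have s1starN m : 0 < m -> m < N -> s1star m = \sum_(d < N | unitary_divisor m d) d.
  move=> m_gt0 lt_mN; rewrite s1starE //.
  by apply: (big_ord_widen_bounded _ _ _ id) => // d /(unitary_divisor_leq m_gt0).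
pose O := \sum_(i < n.+1 | unitary_divisor n i.*2.+1) i.*2.+1.
have s1_even : s1star_even n = \sum_(i < n.+1 | unitary_divisor n i.*2) i.*2.
  transitivity (\sum_(d < N | unitary_divisor n d && (2 %| d)) d).
    apply: (big_ord_widen_bounded _ _ (fun d => unitary_divisor n d && (2 %| d)) id) => //.
    by move=> d /andP[/(unitary_divisor_leq n_gt0)].
  rewrite /N (sum_ord_double (fun d => unitary_divisor n d && (2 %| d)) id) /=.
  rewrite [X in _ + X]big_pred0 => [|i]; last by rewrite dvdn2 /= odd_double andbF.
  by rewrite addn0; apply: eq_bigl => i; rewrite dvdn2 odd_double andbT.
have s1_n : s1star n = s1star_even n + O.
  by rewrite s1starN // /N (sum_ord_double (unitary_divisor n) id) -s1_even.
have s1_2n : s1star n.*2 = (s1star_even n).*2 + O.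
  rewrite s1starN ?double_gt0 // /N (sum_ord_double (unitary_divisor n.*2) id) /=.
  congr (_ + _); last by apply: eq_bigl => i; rewrite unitary_divisor_double_odd //= odd_double.
  rewrite -[(s1star_even n).*2]muln2 /s1star_even big_distrl /=.
  by apply: eq_big => i; rewrite ?unitary_divisor_double_even ?muln2.
by rewrite s1_2n s1_n -addnn addnAC.
Qed.

Lemma qpol_param_even_shift {n d x u v} : d %| n -> 2 %| d -> qpol_param n d x u v ->
  v * n./2 = n./2 + n %[mod n.*2].
Proof.
move=> dvd_dn /dvdnP[d' d_2d'] param; have v_gt0 := qpol_param_gt0 param.
case: param => _ /dvdnP[s v1_s] dvd_v2; set e := n %/ d in v1_s.
have n_2t : n = (d' * e).*2 by rewrite -muln2 mulnAC -d_2d' mulnC divnK.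
have odd_se : odd (s * e).
  move: dvd_v2; rewrite -(prednK v_gt0) v1_s -doubleMr -doubleS -!muln2 dvdn_pmul2r //.
  by rewrite d_2d' => /(dvdn_trans (dvdn_mull d' (dvdnn 2))); rewrite dvdn2 /= negbK.
have [r se_r] : exists r, s * e = r.*2.+1.
  by exists (s * e)./2; rewrite -[LHS]odd_double_half odd_se.
rewrite -(prednK v_gt0) mulSn; apply/eqP; rewrite eqn_modDl; apply/eqP.
have -> : n./2 = d' * e by rewrite {1}n_2t doubleK.
rewrite v1_s (_ : _ * _ = r * n.*2 + n) ?modnMDl // n_2t.
transitivity (s * e * (d' * e).*2); first by rewrite -!muln2; ring.
by rewrite se_r -!muln2 -addn1; ring.
Qed.

Lemma qpol_param_odd_antipodal {n d x u v} : d %| n -> odd d -> qpol_param n d x u v ->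
  exists j, v * j + u = j + n %[mod n.*2].
Proof.
move=> dvd_dn odd_d [u_e _ dvd_v2]; set e := n %/ d in u_e.
have n_ed : n = e * d by rewrite /e divnK.
have [c c_2] : exists c, c.*2 = x.*2.+1 + d.
  by exists (x.*2.+1 + d)./2; rewrite even_halfK // oddD /= odd_double odd_d.
exists (e * c); apply/eqP; rewrite -(eqn_modDr n) (_ : _ + u + n = e * c + e * v.+1 * c).
  by rewrite -addnA addnn eqn_modDl modnn -/(dvdn _ _) n_ed doubleMr dvdn_mulr // dvdn_mul.
by rewrite -addnA u_e {1}n_ed -mulnDr -c_2 -muln2 mulnS; ring.
Qed.

Import GRing.Theory.
Local Open Scope ring_scope.

Definition cayley {F : fieldType} (a : F) : F := (1 + a) / (1 - a).

Lemma cayley_mulN (F : fieldType) (a : F) : a != 1 -> a != -1 -> cayley a * cayley (- a) = 1.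
Proof.
move=> a_neq1 a_neqN1; rewrite /cayley opprK mulf_div [(1 - a) * _]mulrC divff //.
by apply: mulf_neq0; [rewrite addrC addr_eq0 | rewrite subr_eq0 eq_sym].
Qed.

Lemma cayleyN1 (F : fieldType) : cayley (-1 : F) = 0.
Proof. by rewrite /cayley subrr mul0r. Qed.

Lemma prodr_shift_inv {R : comPzRingType} (f : nat -> R) t N :
  (t.*2 %| N)%N -> (forall j, f j * f (j + t)%N = 1) -> \prod_(j < N) f j = 1.
Proof.
move=> /dvdnP[q ->] f_inv; rewrite mulnC.
elim: q => [|q IHq]; first by rewrite muln0 big_ord0.
rewrite mulnS addnC big_split_ord IHq /= mul1r -addnn big_split_ord /= -big_split /=.
by apply: big1 => j _; rewrite (addnC t) addnA f_inv.
Qed.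

Section PrimitiveRoot.

Context {F : fieldType} {m : nat} {z : F}.
Hypothesis z_prim : m.-primitive_root z.

Lemma prim_root_neq0 : z != 0.
Proof.
apply: contra_eq_neq (prim_expr_order z_prim) => ->.
by rewrite expr0n gtn_eqF ?(prim_order_gt0 z_prim) // eq_sym oner_eq0.
Qed.

Lemma prim_expr_subn j b : (b <= m)%N -> z ^+ ((j + m - b) %% m) = z ^+ j / z ^+ b.
Proof.
move=> le_bm; have zb_neq0 : z ^+ b != 0 by rewrite expf_neq0 // prim_root_neq0.
apply: (mulIf zb_neq0); rewrite divfK // prim_expr_mod // -exprD subnK.
  by rewrite exprD (prim_expr_order z_prim) mulr1.
exact: leq_trans le_bm (leq_addl j m).
Qed.

End PrimitiveRoot.

Lemma prim_expr_half {F : fieldType} {n} {z : F} : (n.*2).-primitive_root z -> z ^+ n = -1.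
Proof.
move=> z_prim; have n_gt0 : (0 < n)%N by rewrite -double_gt0 (prim_order_gt0 z_prim).
have : (z ^+ n) ^+ 2 = 1 by rewrite -exprM muln2 prim_expr_order.
move/eqP; rewrite sqrf_eq1 => /orP[/eqP zn1 | /eqP //].
have := eq_prim_root_expr z_prim n 0; rewrite zn1 expr0 eqxx mod0n modn_small.
  by rewrite eqn0Ngt n_gt0.
by rewrite -addnn -{1}[n]addn0 ltn_add2l.
Qed.

(* zeta^(j - pi(j)) in the notation of the statement, for pi = aff_act p. *)
Definition aff_ratio {F : fieldType} (z : F) {m} (p : 'I_m * 'I_m) j : F :=
  z ^+ j / z ^+ (p.2 * j + p.1).

Section AffineRatio.

Context {F : fieldType} {m : nat} {z : F} {p : 'I_m * 'I_m}.
Hypothesis z_prim : m.-primitive_root z.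
Local Notation w := (aff_ratio z p).

Lemma aff_ratioE j : z ^+ ((j + m - aff_act p j) %% m) = w j.
Proof.
rewrite prim_expr_subn ?(ltnW (ltn_pmod _ (prim_order_gt0 z_prim))) //.
by rewrite /aff_act prim_expr_mod.
Qed.

Lemma aff_ratio_modn j : w (j %% m) = w j.
Proof.
rewrite /aff_ratio -(prim_expr_mod z_prim (_ * (j %% m) + _)) -modnDml modnMmr modnDml.
by rewrite !prim_expr_mod.
Qed.

Lemma aff_ratio_neq1 j : p \in quasipolarities m -> w j != 1.
Proof.
rewrite inE => /and3P[_ _ /forallP fixfree].
have lt_jm : (j %% m < m)%N := ltn_pmod j (prim_order_gt0 z_prim).
apply: contra (fixfree (Ordinal lt_jm)); rewrite -aff_ratio_modn => /eqP/divr1_eq/eqP.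
by rewrite (eq_prim_root_expr z_prim) /aff_act /= modn_small // eq_sym.
Qed.

Lemma aff_ratio_shift j t : w (j + t)%N = w j * (z ^+ t / z ^+ (p.2 * t)).
Proof. by rewrite /aff_ratio mulf_div -!exprD mulnDr addnAC. Qed.

Lemma prod_cayley_antiperiodic t : p \in quasipolarities m -> (t.*2 %| m)%N ->
  z ^+ (p.2 * t) = - z ^+ t -> \prod_(j < m) cayley (w j) = 1.
Proof.
move=> p_qpol dvd_m zvt; have zt_neq0 : z ^+ t != 0 by rewrite expf_neq0 // (prim_root_neq0 z_prim).
have wN j : w (j + t)%N = - w j by rewrite aff_ratio_shift zvt invrN mulrN divff // mulrN1.
apply: (prodr_shift_inv (fun j => cayley (w j)) _ _ dvd_m) => j.
by rewrite wN cayley_mulN ?aff_ratio_neq1 // -eqr_oppLR -wN aff_ratio_neq1.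
Qed.

Lemma prod_cayley_eq0 j : w j = -1 -> \prod_(i < m) cayley (w i) = 0.
Proof.
move=> wj; have lt_jm : (j %% m < m)%N := ltn_pmod j (prim_order_gt0 z_prim).
by rewrite (bigD1 (Ordinal lt_jm)) //= aff_ratio_modn wj cayleyN1 mul0r.
Qed.

End AffineRatio.

Lemma prod_cayley_qpol_param {F : fieldType} {n} {z : F} {p : 'I_n.*2 * 'I_n.*2} {d x} :
  (n.*2).-primitive_root z -> (d %| n)%N -> p \in quasipolarities n.*2 ->
  qpol_param n d x p.1 p.2 -> \prod_(j < n.*2) cayley (aff_ratio z p j) = (2 %| d)%:R.
Proof.
move=> z_prim dvd_dn p_qpol param; have zn := prim_expr_half z_prim.
case: (boolP (2 %| d)%N) => [dvd_2d | odd_d].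
  apply: (prod_cayley_antiperiodic z_prim n./2 p_qpol).
    by rewrite even_halfK -?dvdn2 ?(dvdn_trans dvd_2d) // -muln2 dvdn_mulr.
  rewrite -mulrN1 -zn -exprD; apply/eqP; rewrite (eq_prim_root_expr z_prim).
  by rewrite (qpol_param_even_shift dvd_dn dvd_2d param).
rewrite dvdn2 negbK in odd_d; have [j fix_j] := qpol_param_odd_antipodal dvd_dn odd_d param.
apply: (prod_cayley_eq0 z_prim j); rewrite /aff_ratio.
have -> : z ^+ (p.2 * j + p.1) = - z ^+ j.
  by apply/eqP; rewrite -mulrN1 -zn -exprD (eq_prim_root_expr z_prim) fix_j.
by rewrite invrN mulrN divff // expf_neq0 // (prim_root_neq0 z_prim).
Qed.

Theorem theorem2p2 (k : nat) (zeta : algC) :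
  (0 < k)%N -> (k.*2).-primitive_root zeta ->
  let lhs := \sum_(p in Q k)
      \prod_(j < k.*2)
        ((1 + zeta ^+ ((j + k.*2 - aff_act p j) %% k.*2)) /
         (1 - zeta ^+ ((j + k.*2 - aff_act p j) %% k.*2))) in
  lhs = (2 %| k)%:R * ((#|Q k.*2|)%:R - (#|Q k|)%:R)
  /\ (2 %| k)%:R * ((#|Q k.*2|)%:R - (#|Q k|)%:R)
     = (2 %| k)%:R * ((s1star k.*2)%:R - (s1star k)%:R) :> algC.
Proof.
move=> k_gt0 z_prim lhs; have k2_gt0 : (0 < k.*2)%N by rewrite double_gt0.
have lhsE : lhs = (s1star_even k)%:R.
  rewrite /lhs /Q (big_quasipolarities k2_gt0).
  transitivity (\sum_(s in qpol_index k) ((2 %| s.1)%N : nat)%:R : algC).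
    apply: eq_bigr => s s_in; have param := qpol_of_param k2_gt0 s_in.
    have p_qpol : qpol_of k2_gt0 s \in quasipolarities k.*2.
      by rewrite (quasipolarities_imset k2_gt0) imset_f.
    move: s_in; rewrite inE => /andP[/andP[dvd_dk _] _].
    rewrite -(prod_cayley_qpol_param z_prim dvd_dk p_qpol param).
    by apply: eq_bigr => j _; rewrite /cayley aff_ratioE.
  rewrite -natr_sum (sum_qpol_index k (fun d => (2 %| d)%N : nat)) /s1star_even.
  rewrite [in RHS]big_mkcondr; congr _%:R; apply: eq_bigr => d _.
  by case: (2 %| d)%N; rewrite ?muln1 ?muln0.
rewrite lhsE /Q !card_quasipolarities ?double_gt0 //; split => //.
rewrite dvdn2; case: (boolP (odd k)) => [odd_k | even_k].
  by rewrite s1star_even_odd // mul0r.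
by rewrite s1star_double // natrD mul1r addrC addKr.
Qed.
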